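(* Let $p,q$ be distinct primes and let $(G,H,T)$ be the envelope of a right conjugacy closed loop of order $pq$. Let $K$ be a subgroup with $H\lneq K\lneq G$, $|G:K|=q$ and $|K:H|=p$. Put $T_1=T\cap K$, $K_1=\langle T_1\rangle$ and $H_1=H\cap K_1$. Then $(K_1,H_1,T_1)$ is an RCC loop folder of order $p$ and $K_1$ is abelian. Moreover $K_1\trianglelefteq K$, $K=HK_1$, and $H_1\trianglelefteq K$.
   Context: For a finite loop $\mathcal{L}$ with identity $e$: $G=\langle R_a\mid a\in\mathcal L\rangle$ with $R_a\colon x\mapsto xa$, $H$ the stabilizer of $e$, $T=\{R_a\}$; $(G,H,T)$ is the envelope; the loop is right conjugacy closed if $T$ is a union of conjugacy classes of $G$. A loop folder is a triple $(G,H,T)$ with $G$ finite, $H\le G$, $1\in T\subseteq G$, $T$ a set of representatives of the right cosets $H^g\backslash G$ for every $g\in G$; RCC loop folder if $T$ is $G$-conjugation invariant; order $|T|$. *)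

From mathcomp Require Import all_boot all_fingroup.
Set Implicit Arguments. Unset Strict Implicit. Unset Printing Implicit Defensive.
Import GroupScope.
Local Open Scope group_scope.

Definition is_loop (L : finType) (mul : L -> L -> L) (e : L) : Prop :=
  [/\ forall x, mul e x = x, forall x, mul x e = x,
      forall a, injective (fun x => mul x a) & forall a, injective (mul a)].

(* T = { R_a | a in L } where R_a : x |-> x a, as permutations of L
   (mathcomp permutations compose left-to-right: (s * t) x = t (s x)). *)
Definition env_T (L : finType) (mul : L -> L -> L) : {set {perm L}} :=
  [set s : {perm L} | [exists a, [forall x, s x == mul x a]]].

Definition env_G (L : finType) (mul : L -> L -> L) : {set {perm L}} :=
  <<env_T mul>>.

Definition env_H (L : finType) (mul : L -> L -> L) (e : L) : {set {perm L}} :=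
  [set g in env_G mul | g e == e].

Definition RCC_loop (L : finType) (mul : L -> L -> L) : Prop :=
  forall g t, g \in env_G mul -> t \in env_T mul -> t ^ g \in env_T mul.

Definition loop_folder (gT : finGroupType) (G H T : {set gT}) : Prop :=
  [/\ group_set G, group_set H, H \subset G, 1 \in T &
      T \subset G /\
      (forall g x, g \in G -> x \in G -> #|T :&: ((H :^ g) :* x)| = 1%N)].

Definition RCC_loop_folder (gT : finGroupType) (G H T : {set gT}) : Prop :=
  loop_folder G H T /\ (forall g, g \in G -> T :^ g = T).

From mathcomp Require Import all_boot all_fingroup.
Set Implicit Arguments. Unset Strict Implicit. Unset Printing Implicit Defensive.
Import GroupScope.
Local Open Scope group_scope.

(* The stabiliser of e in K is H, so the orbit B of e under K has p points,
   and t |-> t e maps T1 bijectively onto B (each R_b with b in B lies in K).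
   The RCC property makes T1 a normal subset of K.  For 1 <> t in T1 the
   class of t lies in T1 \ 1, so 'C_K[t] has index < p; it is therefore
   transitive on B, and so is <t>, which forces |'C_K[t]| = p |N| with N the
   kernel of K on B.  Two subgroups of order p |N| containing N, one of index
   < p, must coincide, so all elements of T1 commute and K1 = <T1> is abelian.
   Being abelian and transitive on B, K1 has a point stabiliser H1 fixing B
   pointwise, whence H1 <| K, and each coset H1 x (x in K1) meets T1 exactly
   in R_(x e). *)

Lemma eq_subgroups_of_small_index (gT : finGroupType) (p : nat) (G H K N : {group gT}) :
    prime p -> H \subset G -> K \subset G -> N \subset H :&: K ->
    #|H| = (p * #|N|)%N -> #|K| = (p * #|N|)%N -> #|G : H| < p ->
  H :=: K.
Proof.
move=> p_pr sHG sKG sN_HK cardH cardK ltGH_p.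
have N_gt0 : 0 < #|N| := cardG_gt0 N.
have sHK_H : H :&: K \subset H := subsetIl H K.
have indexN : (#|H : H :&: K| * #|H :&: K : N|)%N = p.
  by rewrite Lagrange_index // -divgS ?(subset_trans sN_HK) // cardH mulnK.
have /primeP[_ p_div] := p_pr.
have /p_div/orP[/eqP HK_index1 | /eqP HK_indexp] : #|H : H :&: K| %| p.
  by rewrite -indexN dvdn_mulr.
- apply/eqP; rewrite eqEcard cardH cardK leqnn andbT.
  by rewrite -(index1g sHK_H HK_index1) subsetIr.
- (* Otherwise H :&: K = N, and then #|H * K| = p * #|H| exceeds #|G|. *)
  have cardHK : #|H :&: K| = #|N|.
    move: indexN; rewrite HK_indexp -{2}[p]muln1 => /eqP.
    by rewrite eqn_pmul2l ?prime_gt0 // => /eqP /(index1g sN_HK) ->.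
  have := subset_leq_card (mul_subG sHG sKG).
  rewrite -(leq_pmul2r N_gt0) -{1}cardHK -mul_cardG -(Lagrange sHG) cardK.
  rewrite -mulnA leq_pmul2l ?cardG_gt0 // leq_pmul2r // => le_p_GH.
  by move: ltGH_p; rewrite ltnNge le_p_GH.
Qed.

Section TotalAction.

Variables (aT : finGroupType) (rT : finType) (to : {action aT &-> rT}).
Implicit Types (A C G H K : {group aT}) (x : rT).

Lemma orbit_subset (A B : {set aT}) x : A \subset B -> orbit to A x \subset orbit to B x.
Proof. exact: imsetS. Qed.

Lemma mem_rcoset_astab1 A x g y : g \in A ->
  (y \in 'C_A[x | to] :* g) = (y \in A) && (to x y == to x g).
Proof.
move=> Ag; rewrite mem_rcoset inE groupMr ?groupV //; congr (_ && _).
by rewrite (sameP astab1P eqP) actM (canF_eq (actKV to g)).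
Qed.

Lemma mem_overgroup_astab1 G K x g :
    'C_G[x | to] \subset K -> K \subset G -> g \in G ->
  to x g \in orbit to K x -> g \in K.
Proof.
move=> sCK sKG Gg /orbitP[k Kk xk].
rewrite -(mulgKV k g) groupMr //; apply: (subsetP sCK).
have Gk : k \in G := subsetP sKG k Kk.
rewrite inE groupM ?groupV //=.
by apply/astab1P; rewrite actM -xk actK.
Qed.

Lemma orbit_prime_subgroup p A H x :
    prime p -> H \subset A -> #|orbit to A x| = p -> ~~ (p %| #|A : H|) ->
  orbit to H x = orbit to A x.
Proof.
move=> p_pr sHA card_xA p_ndvd_AH.
apply/eqP; rewrite eqEcard orbit_subset //= card_xA.
have index_eq : (#|A : H| * #|orbit to H x|)%N
                = (p * #|'C_A[x | to] : 'C_H[x | to]|)%N.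
  rewrite card_orbit -card_xA card_orbit !Lagrange_index ?subsetIl //.
  exact: setSI.
have : p %| #|A : H| * #|orbit to H x| by rewrite index_eq dvdn_mulr.
rewrite Euclid_dvdM // (negPf p_ndvd_AH) => /dvdn_leq; apply.
by rewrite card_gt0; apply/set0Pn; exists x; apply: orbit_refl.
Qed.

Lemma orbit_sub_afix1 C a x :
  C \subset 'C[a] -> to x a = x -> orbit to C x \subset 'Fix_to[a].
Proof.
move=> cCa xa; apply/subsetP => _ /orbitP[c Cc <-]; apply/afix1P.
by rewrite -actM (cent1P (subsetP cCa c Cc)) actM xa.
Qed.

Lemma astab1_abelian A x : abelian A -> 'C_A[x | to] \subset 'C(orbit to A x | to).
Proof.
move=> cAA; apply/subsetP => h /setIP[Ah /astab1P xh]; apply/astabP => y xAy.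
apply/afix1P; apply: subsetP xAy; apply: orbit_sub_afix1 xh.
by rewrite sub_cent1 (subsetP cAA).
Qed.

Lemma astab1_abelian_normal K A x :
    A <| K -> abelian A -> orbit to A x = orbit to K x ->
  'C_A[x | to] <| K.
Proof.
move=> /andP[sAK nAK] cAA xA_xK.
rewrite /normal (subset_trans (subsetIl _ _) sAK) /=.
apply/subsetP => k Kk; rewrite inE; apply/subsetP => _ /imsetP[h /setIP[Ah xh] ->].
have /astabP fix_h : h \in 'C(orbit to A x | to).
  by apply: (subsetP (astab1_abelian x cAA)); apply/setIP.
apply/setIP; split; first by rewrite memJ_norm ?(subsetP nAK).
apply/astab1P; rewrite conjgE !actM fix_h ?actKV //.
by rewrite xA_xK mem_orbit ?groupV.
Qed.

End TotalAction.

Section PrimeOrbitTransversal.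

Variables (aT : finGroupType) (rT : finType) (to : {action aT &-> rT}).
Variables (p : nat) (A : {group aT}) (X : {set aT}) (x0 : rT).
Hypotheses (p_pr : prime p) (sXA : X \subset A) (nXA : A \subset 'N(X)).
Hypotheses (X1 : 1 \in X) (card_X : #|X| = p).
Hypotheses (inj_X : {in X &, injective (to x0)}) (card_orbit_x0 : #|orbit to A x0| = p).

Let B := orbit to A x0.
Let N := 'C_A(B | to).

Lemma astab_orbit_cent : N \subset 'C(X).
Proof.
apply/centsP => n Nn t Xt; apply: commute_sym; apply/commgP/conjg_fixP.
(* t ^ n lies in X and sends x0 where t does, since n fixes B pointwise. *)
have fixB m y : m \in N -> y \in B -> to y m = y.
  by case/setIP => _ /astabP; apply.
have Bx0 : x0 \in B := orbit_refl _ _ _.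
apply: inj_X; rewrite ?memJ_norm ?(subsetP nXA) ?(subsetP (subsetIl _ _) n Nn) //.
by rewrite conjgE !actM (fixB n^-1) ?groupV // fixB ?mem_orbit ?(subsetP sXA).
Qed.

Lemma index_cent1_lt t : t \in X -> t != 1 -> #|A : 'C_A[t]| < p.
Proof.
move=> Xt t_neq1; rewrite index_cent1.
have sClass : t ^: A \subset X :\ 1.
  apply/subsetP => _ /imsetP[a Aa ->].
  by rewrite !inE conjg_eq1 t_neq1 memJ_norm ?(subsetP nXA).
apply: leq_ltn_trans (subset_leq_card sClass) _.
by move: (cardsD1 1 X); rewrite X1 card_X add1n => ->.
Qed.

Lemma orbit_cent1 t : t \in X -> t != 1 -> orbit to 'C_A[t] x0 = B.
Proof.
move=> Xt t_neq1; apply: orbit_prime_subgroup p_pr (subsetIl _ _) card_orbit_x0 _.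
by rewrite gtnNdvd ?indexg_gt0 ?index_cent1_lt.
Qed.

Lemma astab1_cycle t b : t \in X -> t != 1 -> b \in B ->
  'C_<[t]>[b | to] = 'C_<[t]>[x0 | to].
Proof.
move=> Xt t_neq1 Bb.
(* 'C_A[t] is transitive on B and centralises <[t]>. *)
have fixB y c : y \in <[t]> -> c \in B -> to c y = c -> B \subset 'Fix_to[y].
  move=> Ty; rewrite -(orbit_cent1 Xt t_neq1) => /orbit_eqP <- cy.
  apply: orbit_sub_afix1 cy; rewrite sub_cent1; apply: subsetP Ty.
  by rewrite cycle_subG -sub_cent1 subsetIr.
apply/setP => y; apply/setIP/setIP => -[Ty /astab1P fix_y].
  by split=> //; apply/astab1P/afix1P/(subsetP (fixB y b Ty Bb fix_y))/orbit_refl.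
by split=> //; apply/astab1P/afix1P/(subsetP (fixB y x0 Ty (orbit_refl _ _ _) fix_y)).
Qed.

Lemma orbit_cycle t : t \in X -> t != 1 -> orbit to <[t]> x0 = B.
Proof.
move=> Xt t_neq1; have sTA : <[t]> \subset A by rewrite cycle_subG (subsetP sXA).
have actsB : [acts <[t]>, on B | to] := subset_trans sTA (acts_orbit _ _ (subsetT _)).
pose m := #|<[t]> : 'C_<[t]>[x0 | to]|.
have sum_m : (#|orbit to <[t]> @: B| * m)%N = p.
  rewrite -card_orbit_x0 -sum_nat_const -(acts_sum_card_orbit actsB).
  by apply: eq_bigr => _ /imsetP[b Bb ->]; rewrite card_orbit astab1_cycle.
have /primeP[_ p_div] := p_pr.
have /p_div/orP[/eqP m1 | /eqP mp] : m %| p by rewrite -sum_m dvdn_mull.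
  have /card_orbit1 orbit1 : #|orbit to <[t]> x0| = 1%N by rewrite card_orbit.
  have : to x0 t \in orbit to <[t]> x0 by rewrite mem_orbit ?cycle_id.
  rewrite orbit1 inE -{2}[x0](act1 to) => /eqP/inj_X t_eq1.
  by rewrite t_eq1 ?eqxx in t_neq1.
by apply/eqP; rewrite eqEcard orbit_subset //= card_orbit_x0 card_orbit -/m mp.
Qed.

Lemma astab1_cent1 t : t \in X -> t != 1 -> 'C_('C_A[t])[x0 | to] = N.
Proof.
move=> Xt t_neq1; apply/eqP; rewrite eqEsubset; apply/andP; split.
  apply/subsetP => c /setIP[/setIP[Ac ct] /astab1P x0c].
  rewrite inE Ac; apply/astabP => b; rewrite -(orbit_cycle Xt t_neq1) => tb.
  apply/afix1P; apply: subsetP tb; apply: orbit_sub_afix1 x0c.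
  by rewrite cycle_subG cent1C.
apply/subsetP => n Nn; have /setIP[An fixB] := Nn.
apply/setIP; split; last exact/astab1P/(astab_act fixB)/orbit_refl.
by apply/setIP; split; last exact/cent1P/(centsP astab_orbit_cent).
Qed.

Lemma card_cent1 t : t \in X -> t != 1 -> #|'C_A[t]| = (p * #|N|)%N.
Proof.
move=> Xt t_neq1; rewrite -(card_orbit_stab to 'C_A[t]%G x0).
by rewrite orbit_cent1 // astab1_cent1 // card_orbit_x0.
Qed.

Theorem conj_invariant_transversal_commute : {in X &, forall t s, commute t s}.
Proof.
move=> t s Xt Xs.
have [->|t_neq1] := eqVneq t 1; first exact: commute_sym (commute1 s).
have [->|s_neq1] := eqVneq s 1; first exact: commute1 t.
have sN_C u : u \in X -> N \subset 'C_A[u].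
  move=> Xu; rewrite subsetI subsetIl /=.
  by rewrite sub_cent1; apply: subsetP Xu; rewrite centsC astab_orbit_cent.
have eqC : 'C_A[t] :=: 'C_A[s].
  apply: (eq_subgroups_of_small_index p_pr (subsetIl _ _) (subsetIl _ _) _
                                     (card_cent1 Xt t_neq1) (card_cent1 Xs s_neq1)).
    by rewrite subsetI !sN_C.
  exact: index_cent1_lt.
have : t \in 'C_A[s] by rewrite -eqC inE (subsetP sXA) ?cent1id.
by case/setIP => _ /cent1P.
Qed.

End PrimeOrbitTransversal.

Lemma normal_loop_folder (gT : finGroupType) (G H : {group gT}) (T : {set gT}) :
    H <| G -> 1 \in T -> T \subset G -> {in G, forall x, #|T :&: H :* x| = 1%N} ->
  loop_folder G H T.
Proof.
move=> /andP[sHG nHG] T_1 sTG cardT; split=> //; try exact: groupP.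
by split=> // g x Gg Gx; rewrite (normP (subsetP nHG g Gg)) cardT.
Qed.

Section Envelope.

Variables (L : finType) (mul : L -> L -> L) (e : L).
Hypothesis loopL : is_loop mul e.

Local Notation T := (env_T mul).
Local Notation G := (env_G mul).
Local Notation H := (env_H mul e).

Lemma loop_mulIg a : injective (mul^~ a).
Proof. by case: loopL. Qed.

Definition rmul (a : L) : {perm L} := perm (@loop_mulIg a).

Lemma rmulE a x : rmul a x = mul x a.
Proof. exact: permE. Qed.

Lemma rmul_e a : rmul a e = a.
Proof. by case: loopL => mul1l _ _ _; rewrite rmulE mul1l. Qed.

Lemma rmul_env_T a : rmul a \in T.
Proof. by rewrite inE; apply/existsP; exists a; apply/forallP => x; rewrite rmulE. Qed.

Lemma env_TE t : t \in T -> t = rmul (t e).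
Proof.
case: loopL => mul1l _ _ _; rewrite inE => /existsP[a /forallP tE].
by apply/permP => x; rewrite rmulE !(eqP (tE _)) mul1l.
Qed.

Lemma env_T_inj : {in T &, injective (fun t : {perm L} => t e)}.
Proof. by move=> t s Tt Ts ts; rewrite (env_TE Tt) (env_TE Ts) ts. Qed.

Lemma env_T_id : 1 \in T.
Proof.
case: loopL => _ mul1r _ _; suff -> : 1 = rmul e by apply: rmul_env_T.
by apply/permP => x; rewrite rmulE perm1 mul1r.
Qed.

Lemma env_HE : H = 'C_G[e | 'P].
Proof. by apply/setP => g; rewrite [RHS]in_setI inE (sameP astab1P eqP). Qed.

Section IntermediateSubgroup.

Variables (K : {group {perm L}}) (p : nat).
Hypotheses (rccL : RCC_loop mul) (sHK : H \subset K) (sKG : K \subset G).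
Hypothesis indexKH : #|K : H| = p.

Let T1 := T :&: K.
Let K1 := <<T1>>.

Lemma astab1_env_K : 'C_K[e | 'P] = H.
Proof.
rewrite env_HE; apply/eqP; rewrite eqEsubset setSI //= subsetI subsetIr andbT.
by rewrite -env_HE.
Qed.

Lemma card_orbit_env_K : #|orbit 'P K e| = p.
Proof. by rewrite card_orbit astab1_env_K indexKH. Qed.

Lemma rmul_orbit_env_K b : b \in orbit 'P K e -> rmul b \in T1.
Proof.
move=> Kb; rewrite inE rmul_env_T.
apply: (mem_overgroup_astab1 (to := 'P) (x := e) _ sKG).
- by rewrite -env_HE.
- exact/mem_gen/rmul_env_T.
- by rewrite /= apermE rmul_e.
Qed.

Lemma imset_env_T1 : (fun t : {perm L} => t e) @: T1 = orbit 'P K e.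
Proof.
apply/eqP; rewrite eqEsubset; apply/andP; split; apply/subsetP => b.
  by case/imsetP => t /setIP[_ Kt] ->; apply: mem_orbit.
move=> Kb; apply/imsetP; exists (rmul b); first exact: rmul_orbit_env_K.
by rewrite rmul_e.
Qed.

Lemma card_env_T1 : #|T1| = p.
Proof.
rewrite -card_orbit_env_K -imset_env_T1 card_in_imset //.
by apply: sub_in2 env_T_inj => t /setIP[].
Qed.

Lemma norm_env_T1 : K \subset 'N(T1).
Proof.
apply/subsetP => k Kk; rewrite inE; apply/subsetP => _ /imsetP[t /setIP[Tt Kt] ->].
by rewrite inE groupJ // andbT rccL ?(subsetP sKG).
Qed.

Lemma sub_env_T1_K1 : T1 \subset K1.
Proof. exact: subset_gen. Qed.

Lemma sub_env_K1 : K1 \subset K.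
Proof. by rewrite gen_subG subsetIr. Qed.

Lemma normal_env_K1 : K1 <| K.
Proof. by rewrite /normal sub_env_K1 (subset_trans norm_env_T1) ?norm_gen. Qed.

Lemma orbit_env_K1 : orbit 'P K1 e = orbit 'P K e.
Proof.
apply/eqP; rewrite eqEsubset orbit_subset ?sub_env_K1 //=.
rewrite -imset_env_T1; apply/subsetP => _ /imsetP[t T1t ->].
exact/mem_orbit/(subsetP sub_env_T1_K1).
Qed.

Lemma abelian_env_K1 : prime p -> abelian K1.
Proof.
move=> p_pr; rewrite abelian_gen; apply/centsP => t T1t s T1s.
apply: (conj_invariant_transversal_commute
          (to := 'P) (A := K) (X := T1) (x0 := e) p_pr) => //.
- exact: subsetIr.
- exact: norm_env_T1.
- by rewrite inE env_T_id group1.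
- exact: card_env_T1.
- by apply: sub_in2 env_T_inj => u /setIP[].
- exact: card_orbit_env_K.
Qed.

Let H1 := H :&: K1.

Lemma env_H1E : H1 = 'C_K1[e | 'P].
Proof.
by rewrite /H1 env_HE setIC setIA (setIidPl (subset_trans sub_env_K1 sKG)).
Qed.

Lemma normal_env_H1 : prime p -> H1 <| K.
Proof.
move=> p_pr; rewrite env_H1E.
exact: astab1_abelian_normal normal_env_K1 (abelian_env_K1 p_pr) orbit_env_K1.
Qed.

Lemma mulg_env_H_K1 : H * K1 = K.
Proof.
rewrite -astab1_env_K.
apply/(subgroup_transitiveP (orbit_refl _ _ _) sub_env_K1 (atrans_orbit _ _ _)).
by rewrite -orbit_env_K1 atrans_orbit.
Qed.

Lemma env_T1_rcoset x : x \in K1 -> T1 :&: 'C_K1[e | 'P] :* x = [set rmul (x e)].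
Proof.
move=> K1x; apply/setP => y; rewrite in_setI mem_rcoset_astab1 // in_set1 /=.
rewrite !apermE; apply/idP/eqP => [/and3P[/setIP[Ty _] _ /eqP <-] | ->].
  exact: env_TE.
have T1_xe : rmul (x e) \in T1.
  exact/rmul_orbit_env_K/mem_orbit/(subsetP sub_env_K1).
by rewrite T1_xe (subsetP sub_env_T1_K1) //= rmul_e.
Qed.

Lemma RCC_loop_folder_env : prime p -> RCC_loop_folder K1 H1 T1.
Proof.
move=> p_pr; have nH1K := normal_env_H1 p_pr; split; last first.
  by move=> g /(subsetP sub_env_K1) /(subsetP norm_env_T1) /normP.
rewrite env_H1E in nH1K *; apply: normal_loop_folder.
- exact: normalS (subsetIl _ _) sub_env_K1 nH1K.
- by rewrite inE env_T_id group1.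
- exact: sub_env_T1_K1.
- by move=> x K1x; rewrite env_T1_rcoset ?cards1.
Qed.

End IntermediateSubgroup.

End Envelope.

Theorem lemma5p1 (L : finType) (mul : L -> L -> L) (e : L) (p q : nat)
  (K : {group {perm L}}) :
  is_loop mul e -> RCC_loop mul ->
  prime p -> prime q -> p != q -> #|L| = (p * q)%N ->
  env_H mul e \proper K -> K \proper env_G mul ->
  #|env_G mul : K| = q -> #|K : env_H mul e| = p ->
  let T1 := env_T mul :&: K in
  let K1 := <<T1>> in
  let H1 := env_H mul e :&: K1 in
  [/\ RCC_loop_folder K1 H1 T1, #|T1| = p & abelian K1] /\
  [/\ K1 <| K, (env_H mul e * K1) = K :> {set {perm L}} & H1 <| K].
Proof.
move=> loopL rccL p_pr _ _ _ /proper_sub sHK /proper_sub sKG _ indexKH T1 K1 H1.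
split; split.
- exact (RCC_loop_folder_env loopL rccL sHK sKG indexKH p_pr).
- exact (card_env_T1 loopL sHK sKG indexKH).
- exact (abelian_env_K1 loopL rccL sHK sKG indexKH p_pr).
- exact (normal_env_K1 rccL sKG).
- exact (mulg_env_H_K1 loopL sHK sKG).
- exact (normal_env_H1 loopL rccL sHK sKG indexKH p_pr).
Qed.
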